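(* Let $0\leq\varepsilon\leq 1$ and let $G$ be a graph with $n$ vertices and $m$ edges such that $t(G)\leq \varepsilon (m/n)^3$. Then \[ \mu_n(G)\leq -(1-\varepsilon)\frac{4m^2}{n^3}. \]
   Context: All graphs are finite, simple and undirected. $t(G)$ is the number of triangles in $G$. $\mu_n(G)$ denotes the smallest eigenvalue of the adjacency matrix of $G$. *)

From HB Require Import structures.
From mathcomp Require Import all_boot all_order all_algebra.
From mathcomp Require Import reals.
Set Implicit Arguments. Unset Strict Implicit. Unset Printing Implicit Defensive.
Import Order.TTheory GRing.Theory Num.Theory.
Local Open Scope ring_scope.

Definition simple_graph (n : nat) (e : rel 'I_n) : Prop :=
  (forall x, ~~ e x x) /\ (forall x y, e x y = e y x).

Definition is_clique (n : nat) (e : rel 'I_n) (S : {set 'I_n}) : bool :=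
  [forall x in S, forall y in S, (x != y) ==> e x y].

Definition num_edges (n : nat) (e : rel 'I_n) : nat :=
  #|[set S : {set 'I_n} | (#|S| == 2)%N && is_clique e S]|.

Definition num_triangles (n : nat) (e : rel 'I_n) : nat :=
  #|[set S : {set 'I_n} | (#|S| == 3)%N && is_clique e S]|.

Definition adj_mx (R : realType) (n : nat) (e : rel 'I_n) : 'M[R]_n :=
  \matrix_(i, j) (e i j)%:R.

Definition is_smallest_eigenvalue (R : realType) (n : nat) (A : 'M[R]_n) (mu : R) : Prop :=
  eigenvalue A mu /\ (forall a : R, eigenvalue A a -> mu <= a).

From HB Require Import structures.
From mathcomp Require Import all_boot all_order all_algebra.
From mathcomp Require Import reals complex.
From mathcomp Require Import ring lra.
Import Order.TTheory GRing.Theory Num.Theory.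
Set Implicit Arguments. Unset Strict Implicit. Unset Printing Implicit Defensive.
Local Open Scope ring_scope.

(* Let r_1, ..., r_n be the eigenvalues of the adjacency matrix A, with least
   one mu and greatest one M. The traces of A, A^2 and A^3 give sum r_i = 0,
   sum r_i^2 = 2m and sum r_i^3 = 6t, hence mu <= 0, and the Rayleigh quotient
   of the all-ones vector gives M >= 2m/n. As r_i - mu >= 0,
     M^3 <= M^2 (M - mu) <= sum r_i^2 (r_i - mu) = 6t - 2m mu,
   so 2m (-mu) >= 8 (m/n)^3 - 6t >= 8 (1 - eps) (m/n)^3.
   The eigenvalues are read off the spectral decomposition of the hermitian
   complexification of A. *)

Section Similarity.
Variables (F : fieldType) (n : nat) (P : 'M[F]_n).
Hypothesis P_unit : P \in unitmx.

Lemma eigenvalue_conj (M : 'M[F]_n) a :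
  eigenvalue (invmx P *m M *m P) a = eigenvalue M a.
Proof.
apply/eigenvalueP/eigenvalueP => -[v vM v_neq0].
  exists (v *m invmx P); last by rewrite mulmx_free_eq0 ?row_free_unit ?unitmx_inv.
  by rewrite scalemxAl -vM !mulmxA mulmxK.
exists (v *m P); last by rewrite mulmx_free_eq0 ?row_free_unit.
by rewrite !mulmxA mulmxK // vM scalemxAl.
Qed.

Lemma mxtrace_conj (M : 'M[F]_n) : \tr (invmx P *m M *m P) = \tr M.
Proof. by rewrite mxtrace_mulC mulmxA mulmxV ?mul1mx. Qed.

Lemma conj_mx_exp (M : 'M[F]_n) k :
  (invmx P *m M *m P) ^+ k = invmx P *m M ^+ k *m P.
Proof.
elim: k => [|k IHk]; first by rewrite !expr0 mulmx1 mulVmx.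
by rewrite !exprS IHk -!mulmxE !mulmxA mulmxK.
Qed.

End Similarity.

Lemma eigenvalue_diag (F : fieldType) n (d : 'rV[F]_n) a :
  eigenvalue (diag_mx d) a = (a \in [seq d 0 i | i : 'I_n]).
Proof.
rewrite eigenvalue_root_char char_poly_trig ?diag_mx_is_trig //.
rewrite (eq_bigr (fun i => 'X - (d 0 i)%:P)) => [|i _]; last by rewrite mxE eqxx mulr1n.
by rewrite -(big_image _ _ (fun i => d 0 i) xpredT (fun x => 'X - x%:P)) root_prod_XsubC.
Qed.

Lemma diag_mx_exp (R : pzRingType) n (d : 'rV[R]_n) k :
  diag_mx d ^+ k = diag_mx (map_mx (fun x => x ^+ k) d).
Proof.
elim: k => [|k IHk].
  by apply/matrixP => i j; rewrite expr0 !mxE.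
apply/matrixP => i j; rewrite exprS IHk -mulmxE mul_diag_mx !mxE.
by rewrite exprS mulrnAr.
Qed.

Lemma map_mx_exp (R S : pzRingType) (f : {rmorphism R -> S}) n (A : 'M[R]_n) k :
  map_mx f (A ^+ k) = map_mx f A ^+ k.
Proof.
elim: k => [|k IHk]; first by rewrite !expr0 map_mx1.
by rewrite !exprS -!mulmxE map_mxM IHk.
Qed.

Local Open Scope sesquilinear_scope.

Lemma unitary_diag_form_le (C : numClosedFieldType) n (P : 'M[C]_n) (d u : 'rV[C]_n) M :
  P \is unitarymx -> (forall i, d 0 i <= M) ->
  (u *m (invmx P *m diag_mx d *m P) *m u^t*) 0 0 <= M * (u *m u^t*) 0 0.
Proof.
move=> P_unitary d_le; set w := u *m P^t*.
have wE : w^t* = P *m u^t* by rewrite !trmx_mul !map_mxM trmxCK.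
have -> : u *m (invmx P *m diag_mx d *m P) *m u^t* = w *m diag_mx d *m w^t*.
  by rewrite wE invmx_unitary // !mulmxA.
have -> : u *m u^t* = w *m w^t*.
  by rewrite wE mulmxA -(mulmxA u) -invmx_unitary // mulVmx ?mulmx1 ?unitarymx_unit.
rewrite !mxE mulr_sumr; apply: ler_sum => i _.
rewrite mul_mx_diag !mxE -mulrA mulrCA mulrA -mulrA.
by apply: ler_wpM2r; [exact: mul_conjC_ge0 | exact: d_le].
Qed.

Section RealSymmetricSpectrum.
Variables (R : rcfType) (n : nat).
Local Notation toC := (real_complex R).

Let conjC_toC (x : R) : (toC x)^* = toC x.
Proof. by apply/CrealP; rewrite complex_real. Qed.

Lemma symmetric_spectral (A : 'M[R]_n) : A^T = A ->
  exists P (r : 'rV[R]_n),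
    P \is unitarymx /\ map_mx toC A = invmx P *m diag_mx (map_mx toC r) *m P.
Proof.
move=> A_sym; set B := map_mx toC A.
have B_herm : B \is hermsymmx.
  apply/is_hermitianmxP; rewrite expr0 scale1r; apply/matrixP => i j.
  by rewrite !mxE -{1}A_sym mxE conjC_toC.
have /mxOverP d_real := hermitian_spectral_diag_real B_herm.
exists (spectralmx B), (map_mx (@complex.Re R) (spectral_diag B)); split.
  exact: spectral_unitarymx.
have -> : map_mx toC (map_mx (@complex.Re R) (spectral_diag B)) = spectral_diag B.
  by apply/matrixP => i j; rewrite !mxE RRe_real.
exact/orthomx_spectralP/hermitian_normalmx.
Qed.

Variables (A : 'M[R]_n) (P : 'M[R[i]]_n) (r : 'rV[R]_n).
Hypotheses (P_unitary : P \is unitarymx)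
  (A_spectral : map_mx toC A = invmx P *m diag_mx (map_mx toC r) *m P).

Let P_unit : P \in unitmx. Proof. exact: unitarymx_unit. Qed.

Lemma eigenvalue_spectral a : eigenvalue A a = (a \in [seq r 0 i | i : 'I_n]).
Proof.
rewrite -(eigenvalue_map toC) A_spectral eigenvalue_conj // eigenvalue_diag.
rewrite -(mem_map (@complexI R)) -map_comp; congr (_ \in _).
by apply: eq_map => i /=; rewrite mxE.
Qed.

Lemma mxtrace_exp_spectral k : \tr (A ^+ k) = \sum_i r 0 i ^+ k.
Proof.
apply: (@complexI R); rewrite -trace_map_mx map_mx_exp A_spectral conj_mx_exp //.
rewrite mxtrace_conj // diag_mx_exp mxtrace_diag rmorph_sum.
by apply: eq_bigr => i _; rewrite !mxE rmorphXn.
Qed.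

Lemma rayleigh_spectral (u : 'rV[R]_n) M : (forall i, r 0 i <= M) ->
  (u *m A *m u^T) 0 0 <= M * (u *m u^T) 0 0.
Proof.
move=> r_le; have entryE (B : 'M[R]_1) : toC (B 0 0) = map_mx toC B 0 0 by rewrite mxE.
rewrite -lecR rmorphM /= !entryE.
have uCE : (map_mx toC u)^t* = map_mx toC u^T.
  by apply/matrixP => i j; rewrite !mxE conjC_toC.
rewrite !map_mxM -uCE A_spectral.
by apply: unitary_diag_form_le => // i; rewrite mxE lecR.
Qed.

Lemma sum_mx_le_spectral M : (forall i, r 0 i <= M) ->
  \sum_i \sum_j A i j <= M * n%:R.
Proof.
pose u : 'rV[R]_n := const_mx 1.
move=> r_le; have := rayleigh_spectral u r_le.
have -> : (u *m A *m u^T) 0 0 = \sum_i \sum_j A i j.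
  rewrite mxE exchange_big; apply: eq_bigr => j _.
  by rewrite !mxE mulr1; apply: eq_bigr => i _; rewrite mxE mul1r.
suff -> : (u *m u^T) 0 0 = n%:R by [].
by rewrite mxE (eq_bigr (fun=> 1)) ?sumr_const ?card_ord // => i _; rewrite !mxE mulr1.
Qed.

End RealSymmetricSpectrum.

Local Close Scope sesquilinear_scope.

Section CountingInSets.
Variable T : finType.

Lemma sum_nat_mem (A : {set T}) : (\sum_x (x \in A : nat))%N = #|A|.
Proof. by rewrite -sum1_card [RHS]big_mkcond; apply: eq_bigr => x _; case: (x \in A). Qed.

Lemma sum_nat_eq (a : T) : (\sum_x (x == a : nat))%N = 1%N.
Proof. by rewrite -(cards1 a) -sum_nat_mem; apply: eq_bigr => x _; rewrite in_set1. Qed.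

Lemma sum_ordered_pairs_in (S : {set T}) :
  (\sum_i \sum_j ((i \in S) && (j \in S :\ i) : nat))%N = (#|S| * (#|S| - 1))%N.
Proof.
transitivity (\sum_i ((i \in S) : nat) * (#|S| - 1))%N; last by rewrite -big_distrl sum_nat_mem.
apply: eq_bigr => i _; case iS: (i \in S); last by rewrite big1.
by rewrite mul1n sum_nat_mem (cardsD1 i S) iS add1n subn1.
Qed.

Lemma sum_ordered_triples_in (S : {set T}) :
  (\sum_i \sum_j \sum_k ((i \in S) && (j \in S :\ i) && (k \in S :\ i :\ j) : nat))%N
  = (#|S| * (#|S| - 1) * (#|S| - 2))%N.
Proof.
transitivity (\sum_i \sum_j ((i \in S) && (j \in S :\ i) : nat) * (#|S| - 2))%N.
  apply: eq_bigr => i _; apply: eq_bigr => j _.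
  case: andP => [[iS jS]|_]; last by rewrite big1.
  rewrite mul1n sum_nat_mem (cardsD1 i S) iS (cardsD1 j (S :\ i)) jS.
  by rewrite !add1n !subSS subn0.
by rewrite -sum_ordered_pairs_in big_distrl; apply: eq_bigr => i _; rewrite big_distrl.
Qed.

Lemma cards3 (i j k : T) : i != j -> j != k -> k != i -> #|[set i; j; k]| = 3%N.
Proof. by move=> ij jk ki; rewrite -setUA cardsU1 cards2 jk !inE negb_or ij eq_sym ki. Qed.

End CountingInSets.

Section GraphCounting.
Variables (n : nat) (e : rel 'I_n).
Hypothesis e_simple : simple_graph e.

Lemma is_cliqueP (S : {set 'I_n}) :
  reflect {in S &, forall x y, x != y -> e x y} (is_clique e S).
Proof.
apply: (iffP forall_inP) => [cl x y xS yS xy | cl x xS].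
  by have /forall_inP/(_ y yS)/implyP := cl x xS; apply.
by apply/forall_inP => y yS; apply/implyP; apply: cl.
Qed.

Lemma adj_neq x y : e x y -> x != y.
Proof. by case: e_simple => irr _ exy; apply: contraTneq exy => ->; rewrite (negPf (irr y)). Qed.

Lemma edge_at_pairE (S : {set 'I_n}) i j :
  ((#|S| == 2)%N && is_clique e S) && ((i \in S) && (j \in S :\ i))
  = e i j && (S == [set i; j]).
Proof.
have [_ sym] := e_simple.
apply/idP/idP.
  case/andP=> /andP[/eqP cS /is_cliqueP cl] /andP[iS /setD1P[ji jS]].
  have eij : e i j by apply: cl => //; rewrite eq_sym.
  rewrite eij eq_sym eqEcard cards2 cS eq_sym ji andbT.
  by apply/subsetP => x; rewrite !inE => /orP[] /eqP ->.
case/andP=> eij /eqP ->; have ij := adj_neq eij.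
rewrite cards2 ij !inE !eqxx orbT orTb [j == i]eq_sym ij andTb !andbT; apply/is_cliqueP => x y.
by rewrite !inE => /orP[] /eqP -> /orP[] /eqP ->; rewrite ?eqxx // sym.
Qed.

Lemma triangle_at_tripleE (S : {set 'I_n}) i j k :
  ((#|S| == 3)%N && is_clique e S)
    && ((i \in S) && (j \in S :\ i) && (k \in S :\ i :\ j))
  = [&& e i j, e j k & e k i] && (S == [set i; j; k]).
Proof.
have [_ sym] := e_simple.
apply/idP/idP.
  case/andP=> /andP[/eqP cS /is_cliqueP cl].
  case/andP=> /andP[iS /setD1P[ji jS]] /setD1P[kj /setD1P[ki kS]].
  have eij : e i j by apply: cl => //; rewrite eq_sym.
  have ejk : e j k by apply: cl => //; rewrite eq_sym.
  have eki : e k i by apply: cl.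
  have card_ijk : #|[set i; j; k]| = 3%N by apply: cards3; rewrite // eq_sym.
  rewrite eij ejk eki /= eq_sym eqEcard cS card_ijk leqnn andbT.
  by apply/subsetP => x; rewrite !inE => /orP[/orP[]|] /eqP ->.
case/andP=> /and3P[eij ejk eki] /eqP ->.
have ij := adj_neq eij; have jk := adj_neq ejk; have ki := adj_neq eki.
rewrite cards3 // !inE !eqxx !orbT !orTb !andbT [j == i]eq_sym [k == j]eq_sym ij jk ki !andbT.
apply/is_cliqueP => x y; rewrite !inE.
by move=> /orP[/orP[]|] /eqP -> /orP[/orP[]|] /eqP ->; rewrite ?eqxx // sym.
Qed.

(* Double counting the pairs (S, (i, j)) of an edge S and an ordered pair
   (i, j) of distinct vertices of S; similarly for triangles below. *)
Lemma sum_adjacent_pairs : (\sum_i \sum_j (e i j : nat))%N = (2 * num_edges e)%N.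
Proof.
rewrite /num_edges -sum_nat_mem big_distrr /=.
transitivity (\sum_(S : {set 'I_n}) \sum_i \sum_j
   (((#|S| == 2)%N && is_clique e S) && ((i \in S) && (j \in S :\ i)) : nat))%N.
  rewrite [RHS]exchange_big /=; apply: eq_bigr => i _.
  rewrite [RHS]exchange_big /=; apply: eq_bigr => j _.
  under eq_bigr => S _ do rewrite edge_at_pairE.
  by case: (e i j); rewrite ?sum_nat_eq ?big1.
apply: eq_bigr => S _; rewrite inE.
case: andP => [[/eqP cS _]|_]; last by rewrite muln0 big1 // => i _; rewrite big1.
by rewrite sum_ordered_pairs_in cS.
Qed.

Lemma sum_closed_3walks :
  (\sum_i \sum_j \sum_k ([&& e i j, e j k & e k i] : nat))%N = (6 * num_triangles e)%N.
Proof.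
rewrite /num_triangles -sum_nat_mem big_distrr /=.
transitivity (\sum_(S : {set 'I_n}) \sum_i \sum_j \sum_k
   (((#|S| == 3)%N && is_clique e S)
      && ((i \in S) && (j \in S :\ i) && (k \in S :\ i :\ j)) : nat))%N.
  rewrite [RHS]exchange_big /=; apply: eq_bigr => i _.
  rewrite [RHS]exchange_big /=; apply: eq_bigr => j _.
  rewrite [RHS]exchange_big /=; apply: eq_bigr => k _.
  under eq_bigr => S _ do rewrite triangle_at_tripleE.
  by case: [&& _, _ & _]; rewrite ?sum_nat_eq ?big1.
apply: eq_bigr => S _; rewrite inE.
case: andP => [[/eqP cS _]|_]; last first.
  by rewrite muln0 big1 // => i _; rewrite big1 // => j _; rewrite big1.
by rewrite sum_ordered_triples_in cS.
Qed.

Variable R : realType.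
Local Notation A := (adj_mx R e).

Lemma adj_mx_sym : A^T = A.
Proof. by case: e_simple => _ sym; apply/matrixP => i j; rewrite !mxE sym. Qed.

Lemma mxtrace_adj : \tr A = 0.
Proof. by case: e_simple => irr _; apply: big1 => i _; rewrite mxE (negPf (irr i)). Qed.

Lemma sum_adj_mx : \sum_i \sum_j A i j = (2 * num_edges e)%:R.
Proof.
rewrite -sum_adjacent_pairs natr_sum; apply: eq_bigr => i _.
by rewrite natr_sum; apply: eq_bigr => j _; rewrite mxE.
Qed.

Lemma mxtrace_adj_exp2 : \tr (A ^+ 2) = (2 * num_edges e)%:R.
Proof.
have [_ sym] := e_simple.
rewrite -sum_adjacent_pairs natr_sum; apply: eq_bigr => i _.
rewrite expr2 -mulmxE mxE natr_sum; apply: eq_bigr => j _.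
by rewrite !mxE sym; case: (e j i); rewrite ?mulr1 ?mulr0.
Qed.

Lemma mxtrace_adj_exp3 : \tr (A ^+ 3) = (6 * num_triangles e)%:R.
Proof.
rewrite -sum_closed_3walks natr_sum; apply: eq_bigr => i _.
rewrite !exprS expr0 -!mulmxE mulmx1 mulmxA mxE.
rewrite (eq_bigr (fun k => \sum_j A i j * A j k * A k i)); last first.
  by move=> k _; rewrite mxE mulr_suml.
rewrite exchange_big natr_sum; apply: eq_bigr => j _.
rewrite natr_sum; apply: eq_bigr => k _.
by rewrite !mxE; case: (e i j); case: (e j k); case: (e k i); rewrite ?mulr1 ?mulr0 ?mul0r.
Qed.

End GraphCounting.

Lemma cube_le_moments (R : realDomainType) n (r : 'I_n -> R) mu j :
  (forall i, mu <= r i) -> mu <= 0 ->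
  r j ^+ 3 <= \sum_i r i ^+ 3 - mu * \sum_i r i ^+ 2.
Proof.
move=> mu_le mu_le0.
have -> : \sum_i r i ^+ 3 - mu * \sum_i r i ^+ 2 = \sum_i r i ^+ 2 * (r i - mu).
  by rewrite mulr_sumr -sumrB; apply: eq_bigr => i _; ring.
rewrite (bigD1 j) //=.
have : 0 <= \sum_(i | i != j) r i ^+ 2 * (r i - mu).
  by apply: sumr_ge0 => i _; rewrite mulr_ge0 ?sqr_ge0 ?subr_ge0.
have : 0 <= r j ^+ 2 * - mu by rewrite mulr_ge0 ?sqr_ge0 ?oppr_ge0.
nra.
Qed.

Lemma least_eigenvalue_moment_bound (R : realFieldType) (N m t eps M mu : R) :
  0 < N -> 0 <= m -> 0 <= eps -> mu <= 0 ->
  2 * m / N <= M -> M ^+ 3 <= 6 * t - mu * (2 * m) -> t <= eps * (m / N) ^+ 3 ->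
  mu <= - ((1 - eps) * (4 * m ^+ 2 / N ^+ 3)).
Proof.
move=> N_gt0 m_ge0 eps_ge0 mu_le0 M_ge M3_le t_le.
have [->|m_neq0] := eqVneq m 0; first by rewrite expr0n /= mulr0 mul0r mulr0 oppr0.
have m_gt0 : 0 < m by rewrite lt0r m_neq0.
set x := m / N.
have x_gt0 : 0 < x by rewrite divr_gt0.
have x3_le : 8 * x ^+ 3 <= M ^+ 3.
  have M_ge2x : 2 * x <= M by rewrite /x mulrA.
  have -> : 8 * x ^+ 3 = (2 * x) ^+ 3 by ring.
  by rewrite lerXn2r ?nnegrE //; lra.
have ex3_ge0 : 0 <= eps * x ^+ 3 by rewrite mulr_ge0 // exprn_ge0 // ltW.
have bound2mE : - ((1 - eps) * (4 * m ^+ 2 / N ^+ 3)) * (2 * m)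
    = 8 * (eps * x ^+ 3) - 8 * x ^+ 3.
  by rewrite /x; field; lra.
rewrite -(ler_pM2r (_ : 0 < 2 * m)) ?bound2mE; last lra.
rewrite -/x in t_le; lra.
Qed.

Theorem corollary4 (R : realType) (n : nat) (e : rel 'I_n) (eps : R) :
  (0 < n)%N -> simple_graph e -> 0 <= eps -> eps <= 1 ->
  (num_triangles e)%:R <= eps * ((num_edges e)%:R / n%:R) ^+ 3 ->
  exists mu : R, is_smallest_eigenvalue (adj_mx R e) mu /\
    mu <= - ((1 - eps) * (4 * (num_edges e)%:R ^+ 2 / n%:R ^+ 3)).
Proof.
move=> n_gt0 e_simple eps_ge0 _ t_le.
have [P [r [P_unitary A_spectral]]] := symmetric_spectral (adj_mx_sym e_simple R).
pose i0 := Ordinal n_gt0.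
have [imin _ r_ge] := @arg_minP _ R _ i0 xpredT (fun i => r 0 i) isT.
have [imax _ r_le] := @arg_maxP _ R _ i0 xpredT (fun i => r 0 i) isT.
have trE := mxtrace_exp_spectral P_unitary A_spectral.
exists (r 0 imin); split.
  split=> [|a]; rewrite (eigenvalue_spectral P_unitary A_spectral).
    by apply: map_f; rewrite mem_enum.
  by case/mapP=> i _ ->; exact: r_ge.
have mu_le0 : r 0 imin <= 0.
  have := trE 1%N; rewrite expr1 mxtrace_adj //.
  under eq_bigr do rewrite expr1; move=> sum_r.
  rewrite -(pmulrn_lle0 _ n_gt0) sum_r -[in X in _ *+ X](card_ord n) -sumr_const.
  by apply: ler_sum => i _; exact: r_ge.
have M_ge : 2 * (num_edges e)%:R / n%:R <= r 0 imax.
  rewrite ler_pdivrMr ?ltr0n // -natrM -(sum_adj_mx e_simple R).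
  exact: sum_mx_le_spectral P_unitary A_spectral _ (fun i => r_le i isT).
apply: (least_eigenvalue_moment_bound (t := (num_triangles e)%:R) (M := r 0 imax))
  => //; first by rewrite ltr0n.
rewrite -!natrM -(mxtrace_adj_exp3 e_simple R) -(mxtrace_adj_exp2 e_simple R) !trE.
exact: cube_le_moments (fun i => r_ge i isT) mu_le0.
Qed.
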